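(* Let $i\in\mathbb Z^{\geq 0}$ and $j\in\mathbb Z$. Then $$R_{i,j}=R_{i+1,F(i+1)+j}\cup R_{i+2,j},$$ and the union is disjoint.
   Context: $\varphi=\frac{1+\sqrt5}{2}$ is the golden ratio; $a(n)=\lfloor n\varphi\rfloor$ and $b(n)=\lfloor n\varphi^2\rfloor$ for $n\in\mathbb N=\{1,2,\dots\}$ are the lower and upper Wythoff sequences. $F$ is the Fibonacci sequence with $F(0)=0$, $F(1)=F(2)=1$, $F(n)=F(n-1)+F(n-2)$. For $i\in\mathbb Z^{\geq 0}$ and $j\in\mathbb Z$, the sequence $f_{i,j}$ is defined by $f_{i,j}(n)=F(i+1)a(n)+F(i)n-j$ for $n\in\mathbb N$, and $R_{i,j}=\{f_{i,j}(n)\mid n\in\mathbb N\}$ is its range. *)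

From Stdlib Require Import Reals ZArith Lia Lra.
Open Scope R_scope.

(* floor on the reals: up x is the unique integer with x < up x <= x + 1 *)
Definition floorR (x : R) : Z := (up x - 1)%Z.

Definition phi : R := (1 + sqrt 5) / 2.

Definition wyth_a (n : nat) : Z := floorR (INR n * phi).

Fixpoint fib (n : nat) : nat :=
  match n with
  | O => 0
  | S m => match m with O => 1 | S k => fib m + fib k end
  end%nat.

Definition f_ij (i : nat) (j : Z) (n : nat) : Z :=
  (Z.of_nat (fib (S i)) * wyth_a n + Z.of_nat (fib i) * Z.of_nat n - j)%Z.

Definition R_ij (i : nat) (j : Z) (m : Z) : Prop :=
  exists n : nat, (1 <= n)%nat /\ f_ij i j n = m.

(** The lower and upper Wythoff sequences [a] and [b = a + id] partition the
    positive integers (Beatty's theorem for [phi] and [phi^2]), and because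
    [phi^2 = phi + 1] they compose as [a (a k) = b k - 1] and
    [a (b k) = a k + b k].  Substituting [n = a k] resp. [n = b k] into
    [f_{i,j}(n)] and using [F(i+2) = F(i+1) + F(i)] gives
    [f_{i,j} (a k) = f_{i+1, F(i+1)+j} k] and [f_{i,j} (b k) = f_{i+2,j} k].
    Hence [R_{i,j}] is the union of the two ranges, and the union is disjoint
    because [f_{i,j}] is injective and [a], [b] have disjoint ranges. *)

From Stdlib Require Import Reals ZArith Lia Lra.

Open Scope R_scope.

Lemma floorR_spec x : IZR (floorR x) <= x < IZR (floorR x) + 1.
Proof.
  unfold floorR. destruct (archimed x) as [H1 H2].
  rewrite minus_IZR. simpl. lra.
Qed.

Lemma floorR_unique x z : IZR z <= x < IZR z + 1 -> floorR x = z.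
Proof.
  intros [H1 H2]. unfold floorR.
  assert (z + 1 = up x)%Z by (apply tech_up; rewrite plus_IZR; simpl; lra).
  lia.
Qed.

Lemma phi_sq : phi * phi = phi + 1.
Proof.
  unfold phi. assert (H := sqrt_sqrt 5 ltac:(lra)). nra.
Qed.

Lemma phi_bounds : 3/2 < phi < 2.
Proof.
  unfold phi. assert (H := sqrt_sqrt 5 ltac:(lra)).
  assert (H0 := sqrt_pos 5). nra.
Qed.

(* Used with [A = a k], [K = k]: the fractional part [K phi - A] of [k phi]
   then determines [floor (A phi)]. *)
Lemma mul_phi_decomp A K : A * phi = A + K - (K * phi - A) * (phi - 1).
Proof.
  assert (H := phi_sq).
  replace (A + K - (K * phi - A) * (phi - 1))
    with (A * phi + K + K * phi - K * (phi * phi)) by ring.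
  rewrite H. ring.
Qed.

Lemma mod5_of_square_mod5 k : ((k * k) mod 5 = 0 -> k mod 5 = 0)%Z.
Proof.
  rewrite Z.mul_mod by lia.
  assert (Hr := Z.mod_pos_bound k 5 ltac:(lia)).
  assert (Hc : (k mod 5 = 0 \/ k mod 5 = 1 \/ k mod 5 = 2 \/ k mod 5 = 3
                \/ k mod 5 = 4)%Z) by lia.
  destruct Hc as [E|[E|[E|[E|E]]]]; rewrite E; cbn; lia.
Qed.

(* Infinite descent: [k = 5 q] and then [(q, n)] is a smaller solution. *)
Lemma five_square_eq_square n k : (5 * n * n = k * k -> n = 0)%Z.
Proof.
  remember (Z.abs_nat n) as N eqn:HN. revert n k HN.
  induction N as [N IH] using lt_wf_ind; intros n k HN Hnk.
  destruct (Z.eq_dec n 0) as [|Hn]; [assumption|exfalso].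
  assert (Hk : k = (5 * (k / 5))%Z).
  { assert (Hk5 : (k mod 5 = 0)%Z).
    { apply mod5_of_square_mod5.
      rewrite <- Hnk, <- Z.mul_assoc, Z.mul_comm. apply Z.mod_mul. lia. }
    rewrite (Z.div_mod k 5) at 1 by lia. lia. }
  set (q := (k / 5)%Z) in Hk.
  assert (Hq : (5 * q * q = n * n)%Z) by nia.
  assert (Hqn : (Z.abs_nat q < N)%nat).
  { subst N. apply Nat2Z.inj_lt. rewrite !Nat2Z.inj_abs_nat. nia. }
  apply Hn. rewrite (IH _ Hqn q n eq_refl Hq) in Hq. nia.
Qed.

Lemma phi_irrational n m : (n <> 0)%Z -> IZR n * phi <> IZR m.
Proof.
  intros Hn H. unfold phi in H.
  assert (Hs := sqrt_sqrt 5 ltac:(lra)).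
  assert (Hs2 : IZR n * sqrt 5 = IZR (2 * m - n))
    by (rewrite minus_IZR, mult_IZR; simpl; lra).
  assert (H5 : IZR (5 * n * n) = IZR ((2 * m - n) * (2 * m - n))).
  { rewrite !mult_IZR, <- Hs2. simpl. nra. }
  apply eq_IZR, five_square_eq_square in H5. contradiction.
Qed.

Lemma wyth_a_spec n : (1 <= n)%nat ->
  IZR (wyth_a n) < INR n * phi < IZR (wyth_a n) + 1.
Proof.
  intros Hn. unfold wyth_a. destruct (floorR_spec (INR n * phi)) as [[H1|H1] H2].
  - lra.
  - rewrite INR_IZR_INZ in H1. exfalso.
    apply (phi_irrational (Z.of_nat n) (floorR (IZR (Z.of_nat n) * phi))); [lia | lra].
Qed.

Lemma wyth_a_ge1 k : (1 <= k)%nat -> (1 <= wyth_a k)%Z.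
Proof.
  intros Hk. assert (H := wyth_a_spec k Hk). assert (Hb := phi_bounds).
  apply le_INR in Hk. simpl in Hk.
  enough (0 < wyth_a k)%Z by lia.
  apply lt_IZR. nra.
Qed.

Lemma wyth_a_lt n n' : (n < n')%nat -> (wyth_a n < wyth_a n')%Z.
Proof.
  intros H. unfold wyth_a.
  destruct (floorR_spec (INR n * phi)). destruct (floorR_spec (INR n' * phi)).
  assert (H' : INR (S n) <= INR n') by (apply le_INR; lia). rewrite S_INR in H'.
  assert (Hb := phi_bounds). assert (0 <= INR n) by apply pos_INR.
  apply lt_IZR. nra.
Qed.

(* [b n = floor (n phi^2) = a n + n], as [phi^2 = phi + 1]. *)
Definition wyth_b (n : nat) : Z := (wyth_a n + Z.of_nat n)%Z.

Lemma wyth_a_of_a k n : (1 <= k)%nat -> Z.of_nat n = wyth_a k ->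
  wyth_a n = (wyth_b k - 1)%Z.
Proof.
  intros Hk Hn. unfold wyth_a at 1, wyth_b. apply floorR_unique.
  assert (H := wyth_a_spec k Hk). assert (Hb := phi_bounds).
  rewrite INR_IZR_INZ, Hn. rewrite INR_IZR_INZ in H.
  rewrite minus_IZR, plus_IZR, (mul_phi_decomp _ (IZR (Z.of_nat k))).
  nra.
Qed.

Lemma wyth_a_of_b k n : (1 <= k)%nat -> Z.of_nat n = wyth_b k ->
  wyth_a n = (wyth_a k + wyth_b k)%Z.
Proof.
  intros Hk Hn. unfold wyth_a at 1. apply floorR_unique.
  assert (H := wyth_a_spec k Hk). assert (Hb := phi_bounds).
  rewrite INR_IZR_INZ, Hn. rewrite INR_IZR_INZ in H. unfold wyth_b.
  rewrite !plus_IZR, Rmult_plus_distr_r, (mul_phi_decomp _ (IZR (Z.of_nat k))).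
  nra.
Qed.

Lemma bracket_mul_recip c d m y : 0 < c -> c * d = 1 ->
  m < y * c < m + 1 -> m * d < y < (m + 1) * d.
Proof.
  intros Hc Hcd [H1 H2].
  assert (Hd : 0 < d) by nra.
  assert (0 < (y * c - m) * d) by (apply Rmult_lt_0_compat; lra).
  assert (0 < (m + 1 - y * c) * d) by (apply Rmult_lt_0_compat; lra).
  assert (y * c * d = y) by (rewrite Rmult_assoc, Hcd; ring).
  split; nra.
Qed.

(* [1/phi + 1/phi^2 = 1]: from [m = a k = b k'] the bracketing
   [m < k phi, k' phi^2 < m + 1] puts [k + k'] strictly between [m] and [m + 1]. *)
Lemma wyth_a_neq_b k k' : (1 <= k)%nat -> (1 <= k')%nat -> wyth_a k <> wyth_b k'.
Proof.
  unfold wyth_b. intros Hk Hk' He.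
  assert (Hb := phi_bounds). assert (Hp := phi_sq).
  assert (H := wyth_a_spec k Hk). assert (H' := wyth_a_spec k' Hk').
  rewrite INR_IZR_INZ in H, H'.
  assert (E : IZR (wyth_a k') = IZR (wyth_a k) - IZR (Z.of_nat k'))
    by (rewrite He, plus_IZR; ring).
  assert (H'' : IZR (wyth_a k) < IZR (Z.of_nat k') * (phi + 1) < IZR (wyth_a k) + 1)
    by (rewrite E in H'; lra).
  apply (bracket_mul_recip phi (phi - 1)) in H; [|lra|nra].
  apply (bracket_mul_recip (phi + 1) (2 - phi)) in H''; [|lra|nra].
  assert (Hlo : (wyth_a k < Z.of_nat k + Z.of_nat k')%Z)
    by (apply lt_IZR; rewrite plus_IZR; lra).
  assert (Hhi : (Z.of_nat k + Z.of_nat k' < wyth_a k + 1)%Z)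
    by (apply lt_IZR; rewrite !plus_IZR; simpl; lra).
  lia.
Qed.

(* With [q = floor (n / phi)] (note [phi - 1 = 1 / phi]) always [n < (q + 1) phi];
   either [(q + 1) phi < n + 1], so [n = a (q + 1)], or [n = b (n - q)]. *)
Lemma wyth_a_b_cover n : (1 <= n)%nat ->
  (exists k, (1 <= k)%nat /\ Z.of_nat n = wyth_a k) \/
  (exists k, (1 <= k)%nat /\ Z.of_nat n = wyth_b k).
Proof.
  intros Hn. assert (Hb := phi_bounds). assert (Hp := phi_sq).
  assert (HN : 1 <= IZR (Z.of_nat n)) by (apply IZR_le; lia).
  destruct (floorR_spec (IZR (Z.of_nat n) * (phi - 1))) as [Hq1 Hq2].
  set (q := floorR _) in Hq1, Hq2. set (N := IZR (Z.of_nat n)) in *.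
  assert (Hq0 : (0 <= q)%Z)
    by (enough (0 < q + 1)%Z by lia; apply lt_IZR; rewrite plus_IZR; simpl; nra).
  assert (Hqn : (q < Z.of_nat n)%Z) by (apply lt_IZR; fold N; nra).
  assert (Hlow : N < (IZR q + 1) * phi).
  { assert (0 < (IZR q + 1 - N * (phi - 1)) * phi) by (apply Rmult_lt_0_compat; lra).
    nra. }
  destruct (Rlt_le_dec (IZR (q + 1) * phi) (N + 1)) as [Hc|Hc].
  - left. exists (Z.to_nat (q + 1)). split; [lia|].
    unfold wyth_a. symmetry. apply floorR_unique.
    rewrite INR_IZR_INZ, Z2Nat.id, plus_IZR by lia. rewrite plus_IZR in Hc. fold N. lra.
  - assert (Hc' : N + 1 < IZR (q + 1) * phi).
    { destruct Hc as [Hc|Hc]; [exact Hc|exfalso].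
      apply (phi_irrational (q + 1) (Z.of_nat n + 1)); [lia|].
      rewrite !plus_IZR in *. fold N. lra. }
    rewrite plus_IZR in Hc'. simpl in Hc'.
    right. exists (Z.to_nat (Z.of_nat n - q)). split; [lia|].
    assert (Ha : wyth_a (Z.to_nat (Z.of_nat n - q)) = q).
    { unfold wyth_a. apply floorR_unique.
      rewrite INR_IZR_INZ, Z2Nat.id, minus_IZR by lia. fold N. nra. }
    unfold wyth_b. rewrite Ha. lia.
Qed.

Lemma fib_S_pos i : (1 <= fib (S i))%nat.
Proof.
  induction i as [|i IH]; [simpl; lia|].
  change (fib (S (S i))) with (fib (S i) + fib i)%nat. lia.
Qed.

Lemma fib_SS_Z i :
  Z.of_nat (fib (S (S i))) = (Z.of_nat (fib (S i)) + Z.of_nat (fib i))%Z.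
Proof. change (fib (S (S i))) with (fib (S i) + fib i)%nat. lia. Qed.

Section Recurrence.

Variables (i : nat) (j : Z).

Lemma f_ij_inj n n' : f_ij i j n = f_ij i j n' -> n = n'.
Proof.
  intros H. assert (Hf := fib_S_pos i). unfold f_ij in H.
  destruct (Nat.lt_trichotomy n n') as [Hl|[Hl|Hl]]; [exfalso| |exfalso];
    try assumption; assert (Ha := wyth_a_lt _ _ Hl); nia.
Qed.

Lemma f_ij_of_a k n : (1 <= k)%nat -> Z.of_nat n = wyth_a k ->
  f_ij i j n = f_ij (S i) (Z.of_nat (fib (S i)) + j) k.
Proof.
  intros Hk Hn. unfold f_ij. rewrite (wyth_a_of_a k n Hk Hn), Hn, fib_SS_Z.
  unfold wyth_b. ring.
Qed.

Lemma f_ij_of_b k n : (1 <= k)%nat -> Z.of_nat n = wyth_b k ->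
  f_ij i j n = f_ij (S (S i)) j k.
Proof.
  intros Hk Hn. unfold f_ij. rewrite (wyth_a_of_b k n Hk Hn), Hn, !fib_SS_Z.
  unfold wyth_b. ring.
Qed.

Lemma R_ij_split m :
  R_ij i j m -> R_ij (S i) (Z.of_nat (fib (S i)) + j) m \/ R_ij (S (S i)) j m.
Proof.
  intros [n [Hn <-]].
  destruct (wyth_a_b_cover n Hn) as [[k [Hk E]]|[k [Hk E]]].
  - left. exists k. split; [exact Hk|]. symmetry. exact (f_ij_of_a k n Hk E).
  - right. exists k. split; [exact Hk|]. symmetry. exact (f_ij_of_b k n Hk E).
Qed.

Lemma R_ij_S_sub m : R_ij (S i) (Z.of_nat (fib (S i)) + j) m -> R_ij i j m.
Proof.
  intros [k [Hk <-]]. assert (Ha := wyth_a_ge1 k Hk).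
  exists (Z.to_nat (wyth_a k)). split; [lia|].
  apply f_ij_of_a; [exact Hk | lia].
Qed.

Lemma R_ij_SS_sub m : R_ij (S (S i)) j m -> R_ij i j m.
Proof.
  intros [k [Hk <-]]. assert (Ha := wyth_a_ge1 k Hk).
  exists (Z.to_nat (wyth_b k)). unfold wyth_b. split; [lia|].
  apply f_ij_of_b; [exact Hk | unfold wyth_b; lia].
Qed.

Lemma R_ij_S_SS_disjoint m :
  ~ (R_ij (S i) (Z.of_nat (fib (S i)) + j) m /\ R_ij (S (S i)) j m).
Proof.
  intros [[k [Hk Hm]] [k' [Hk' Hm']]].
  assert (Ha := wyth_a_ge1 k Hk). assert (Ha' := wyth_a_ge1 k' Hk').
  rewrite <- (f_ij_of_a k (Z.to_nat (wyth_a k))) in Hm by (auto; lia).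
  rewrite <- (f_ij_of_b k' (Z.to_nat (wyth_b k'))) in Hm'
    by (auto; unfold wyth_b; lia).
  rewrite <- Hm' in Hm. apply f_ij_inj in Hm.
  apply (wyth_a_neq_b k k' Hk Hk'). unfold wyth_b in *. lia.
Qed.

End Recurrence.

Theorem theorem2p3 (i : nat) (j : Z) :
  (forall m : Z,
     R_ij i j m <-> (R_ij (S i) (Z.of_nat (fib (S i)) + j)%Z m \/ R_ij (S (S i)) j m)) /\
  (forall m : Z, ~ (R_ij (S i) (Z.of_nat (fib (S i)) + j)%Z m /\ R_ij (S (S i)) j m)).
Proof.
  split.
  - intros m. split.
    + apply R_ij_split.
    + intros [H|H]; [exact (R_ij_S_sub i j m H) | exact (R_ij_SS_sub i j m H)].
  - apply R_ij_S_SS_disjoint.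
Qed.
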